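(* Let $\{x_k\}$ be an infinite sequence generated by the Subgradient-InexP method (with any positive stepsizes $t_k$), under the standing assumptions, and let $\nu:=\frac{1+2\bar\gamma}{1-2\bar\lambda}$. Then for every $x\in C$ and every $k=0,1,\dots$, $$\|x_{k+1}-x\|^2\le\|x_k-x\|^2+\nu t_k^2\|s_k\|^2-2t_k\big[f(x_k)-f(x)-\epsilon_k\big].$$
   Context: Problem: minimize a convex function $f:\mathbb{R}^n\to\mathbb{R}$ over a nonempty closed convex set $C\subset\mathbb{R}^n$. For $\epsilon\ge0$, $\partial_\epsilon f(x):=\{s\in\mathbb{R}^n: f(y)\ge f(x)+\langle s,y-x\rangle-\epsilon\ \forall y\in\mathbb{R}^n\}$; $\partial f=\partial_0 f$. A relative error tolerance function with forcing parameters $\gamma,\theta,\lambda\ge0$ is any $\varphi_{\gamma,\theta,\lambda}:(\mathbb{R}^n)^3\to[0,\infty)$ with $\varphi_{\gamma,\theta,\lambda}(u,v,w)\le\gamma\|v-u\|^2+\theta\|w-v\|^2+\lambda\|w-u\|^2$. For $u\in C$, $\mathcal{P}_C(\varphi_{\gamma,\theta,\lambda},u,v):=\{w\in C:\langle v-w,z-w\rangle\le\varphi_{\gamma,\theta,\lambda}(u,v,w)\ \forall z\in C\}$. Subgradient-InexP method: given nonnegative sequences $\{\epsilon_k\},\{\gamma_k\},\{\theta_k\},\{\lambda_k\}$ and $x_0\in C$, at iteration $k$: if $0\in\partial f(x_k)$ stop; otherwise choose a nonzero $s_k\in\partial_{\epsilon_k}f(x_k)$, a stepsize $t_k>0$,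 and any $x_{k+1}\in\mathcal{P}_C(\varphi_{\gamma_k,\theta_k,\lambda_k},x_k,x_k-t_ks_k)$ (for some relative error tolerance functions $\varphi_{\gamma_k,\theta_k,\lambda_k}$). Standing assumptions: there exist $\bar\gamma\ge0$ and $\bar\theta,\bar\lambda\in[0,1/2)$ with $\gamma_k\in[0,\bar\gamma)$, $\theta_k\in[0,\bar\theta)$, $\lambda_k\in[0,\bar\lambda)$ for all $k$, and the generated sequence is infinite. *)

From HB Require Import structures.
From mathcomp Require Import all_boot all_order all_algebra.
From mathcomp Require Import all_classical all_reals all_analysis.
Set Implicit Arguments. Unset Strict Implicit. Unset Printing Implicit Defensive.
Import Order.TTheory GRing.Theory Num.Theory.
Import numFieldTopology.Exports.
Local Open Scope ring_scope.
Local Open Scope classical_set_scope.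

Section Defs.
Variables (R : realType) (n : nat).
Notation V := 'rV[R]_n.

Definition dotp (u v : V) : R := \sum_(i < n) u ord0 i * v ord0 i.
Definition enorm (u : V) : R := Num.sqrt (dotp u u).

Definition convex_setRn (C : set V) : Prop :=
  forall x y (a : R), C x -> C y -> 0 <= a <= 1 -> C (a *: x + (1 - a) *: y).

Definition convex_funRn (f : V -> R) : Prop :=
  forall x y (a : R), 0 <= a <= 1 ->
    f (a *: x + (1 - a) *: y) <= a * f x + (1 - a) * f y.

Definition eps_subdiff (f : V -> R) (eps : R) (x : V) : set V :=
  [set s | forall y, f y >= f x + dotp s (y - x) - eps].
Definition subdiff (f : V -> R) (x : V) : set V := eps_subdiff f 0 x.

Definition rel_err_tol (gamma theta lambda : R) (phi : V -> V -> V -> R) : Prop :=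
  forall u v w, 0 <= phi u v w /\
    phi u v w <= gamma * enorm (v - u) ^+ 2 + theta * enorm (w - v) ^+ 2
                 + lambda * enorm (w - u) ^+ 2.

Definition inexP (C : set V) (phi : V -> V -> V -> R) (u v : V) : set V :=
  [set w | C w /\ forall z, C z -> dotp (v - w) (z - w) <= phi u v w].
End Defs.

From HB Require Import structures.
From mathcomp Require Import all_boot all_order all_algebra.
From mathcomp Require Import all_classical all_reals all_analysis.
From mathcomp Require Import ring lra.
Import Order.TTheory GRing.Theory Num.Theory.
Import numFieldTopology.Exports.
Local Open Scope ring_scope.
Local Open Scope classical_set_scope.

(* Write u = x_k, v = u - t_k s_k (the subgradient step) and w = x_(k+1),
   an inexact projection of v onto C.
   1. For w in P_C(phi, u, v) and any z in C, expanding w - z = (w - v) +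
      (v - z) gives  |w - z|^2 <= |v - z|^2 - |w - v|^2 + 2 phi(u, v, w).
   2. Taking z = u (u lies in C) bounds |w - u|^2; inserted in the relative
      error bound on phi this yields the purely scalar estimate
      2 phi - |w - v|^2 <= ((1 + 2 gamma) / (1 - 2 lambda) - 1) |v - u|^2.
   3. The epsilon-subgradient inequality gives the usual estimate
      |v - z|^2 <= |u - z|^2 + t^2 |s|^2 - 2 t (f u - f z - eps).
   4. The factor (1 + 2 gamma) / (1 - 2 lambda) is monotone in gamma and
      lambda, so it is bounded by nu; since |v - u|^2 = t^2 |s|^2, the
      theorem follows by adding the three inequalities. *)

Set Implicit Arguments. Unset Strict Implicit.

Section InnerProduct.
Variables (R : realType) (n : nat).
Implicit Types u v w : 'rV[R]_n.

Lemma dotpC u v : dotp u v = dotp v u.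
Proof. by apply: eq_bigr => i _; rewrite mulrC. Qed.

Lemma dotpDl u v w : dotp (u + v) w = dotp u w + dotp v w.
Proof. by rewrite /dotp -big_split; apply: eq_bigr => i _; rewrite mxE mulrDl. Qed.

Lemma dotpZl (a : R) u v : dotp (a *: u) v = a * dotp u v.
Proof. by rewrite /dotp mulr_sumr; apply: eq_bigr => i _; rewrite mxE mulrA. Qed.

Lemma dotpNl u v : dotp (- u) v = - dotp u v.
Proof. by rewrite -scaleN1r dotpZl mulN1r. Qed.

Lemma dotpDr u v w : dotp u (v + w) = dotp u v + dotp u w.
Proof. by rewrite dotpC dotpDl !(dotpC u). Qed.

Lemma dotpNr u v : dotp u (- v) = - dotp u v.
Proof. by rewrite dotpC dotpNl dotpC. Qed.

Lemma dotpZr (a : R) u v : dotp u (a *: v) = a * dotp u v.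
Proof. by rewrite dotpC dotpZl dotpC. Qed.

Lemma dotp_ge0 u : 0 <= dotp u u.
Proof. by apply: sumr_ge0 => i _; rewrite -expr2 sqr_ge0. Qed.

Lemma enorm_sq u : enorm u ^+ 2 = dotp u u.
Proof. by rewrite sqr_sqrtr // dotp_ge0. Qed.

Lemma enormD_sq u v :
  enorm (u + v) ^+ 2 = enorm u ^+ 2 + 2 * dotp u v + enorm v ^+ 2.
Proof. by rewrite !enorm_sq dotpDl !dotpDr (dotpC v u); ring. Qed.

Lemma enormZ_sq (a : R) u : enorm (a *: u) ^+ 2 = a ^+ 2 * enorm u ^+ 2.
Proof. by rewrite !enorm_sq dotpZl dotpZr mulrA expr2. Qed.

End InnerProduct.

Section InexactProjection.
Variables (R : realType) (n : nat).
Implicit Types u v w z : 'rV[R]_n.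

Lemma inexP_dist (C : set 'rV[R]_n) phi u v w z :
  inexP C phi u v w -> C z ->
  enorm (w - z) ^+ 2 <= enorm (v - z) ^+ 2 - enorm (w - v) ^+ 2 + 2 * phi u v w.
Proof.
move=> [_ hproj] Cz.
have split_wz : w - z = (w - v) + (v - z) by rewrite addrA subrK.
have hvar : dotp (v - w) (z - w) = enorm (w - v) ^+ 2 + dotp (w - v) (v - z).
  rewrite -(opprB w v) -(opprB w z) dotpNl dotpNr opprK split_wz dotpDr.
  by rewrite enorm_sq.
have := hproj z Cz; rewrite hvar => h.
by rewrite split_wz enormD_sq; lra.
Qed.

(* Step 2, scalar core: with D = |w - u|^2, T = |v - u|^2, Q = |w - v|^2,
   the relative error bound and Step 1 at z = u bound 2 phi - Q by a
   multiple of T alone. *)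
Lemma tolerance_bound (gamma theta lambda ph D T Q : R) :
  0 <= gamma -> theta <= 1/2 -> 0 <= lambda -> lambda < 1/2 ->
  0 <= D -> 0 <= T -> 0 <= Q ->
  ph <= gamma * T + theta * Q + lambda * D -> D <= T - Q + 2 * ph ->
  2 * ph - Q <= ((1 + 2 * gamma) / (1 - 2 * lambda) - 1) * T.
Proof.
move=> g0 th1 l0 l1 D0 T0 Q0 hph hD.
have pos : 0 < 1 - 2 * lambda by lra.
have hDT : (1 - 2 * lambda) * D <= (1 + 2 * gamma) * T.
  have : 0 <= (1 - 2 * theta) * Q by apply: mulr_ge0 => //; lra.
  lra.
have hfac : (1 + 2 * gamma) / (1 - 2 * lambda) - 1
    = 2 * (gamma + lambda) / (1 - 2 * lambda).
  by field; rewrite gt_eqF.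
rewrite hfac mulrAC ler_pdivlMr //.
have : (1 - 2 * lambda) * (2 * ph - Q)
    <= (1 - 2 * lambda) * (2 * gamma * T + 2 * lambda * D).
  have hthQ : theta * Q <= 1/2 * Q by exact: ler_wpM2r.
  by apply: ler_wpM2l; lra.
have : 2 * lambda * ((1 - 2 * lambda) * D) <= 2 * lambda * ((1 + 2 * gamma) * T).
  by apply: ler_wpM2l; rewrite ?mulr_ge0.
nra.
Qed.

Lemma inexP_tolerance (C : set 'rV[R]_n) phi (gamma theta lambda : R) u v w :
  0 <= gamma -> theta <= 1/2 -> 0 <= lambda -> lambda < 1/2 ->
  rel_err_tol gamma theta lambda phi -> C u -> inexP C phi u v w ->
  2 * phi u v w - enorm (w - v) ^+ 2
    <= ((1 + 2 * gamma) / (1 - 2 * lambda) - 1) * enorm (v - u) ^+ 2.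
Proof.
move=> g0 th1 l0 l1 herr Cu hw.
have [_ hph] := herr u v w.
apply: tolerance_bound hph _ => //; rewrite ?enorm_sq ?dotp_ge0 // -!enorm_sq.
exact: inexP_dist hw Cu.
Qed.

Lemma tolerance_factor_mono (gamma lambda gbar lbar : R) :
  0 <= gamma -> gamma <= gbar -> 0 <= lambda -> lambda <= lbar -> lbar < 1/2 ->
  (1 + 2 * gamma) / (1 - 2 * lambda) <= (1 + 2 * gbar) / (1 - 2 * lbar).
Proof.
move=> g0 ggb l0 llb lb1.
have pl : 0 < 1 - 2 * lambda by lra.
have plb : 0 < 1 - 2 * lbar by lra.
rewrite ler_pdivrMr // mulrAC ler_pdivlMr //; nra.
Qed.

End InexactProjection.

Lemma subgradient_step_dist (R : realType) (n : nat) (f : 'rV[R]_n -> R)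
    (eps t : R) (u s z : 'rV[R]_n) :
  0 <= t -> eps_subdiff f eps u s ->
  enorm (u - t *: s - z) ^+ 2
    <= enorm (u - z) ^+ 2 + t ^+ 2 * enorm s ^+ 2 - 2 * t * (f u - f z - eps).
Proof.
move=> t0 hs.
have -> : u - t *: s - z = (u - z) + (- t) *: s by rewrite addrAC scaleNr.
rewrite enormD_sq enormZ_sq sqrrN dotpZr.
have hsub : f u - f z - eps <= dotp s (u - z).
  by have := hs z; rewrite -(opprB u z) dotpNr; lra.
have : t * (f u - f z - eps) <= t * dotp s (u - z) by rewrite ler_wpM2l.
by rewrite dotpC; lra.
Qed.

Theorem mainTheorem2 (R : realType) (n : nat)
  (f : 'rV[R]_n -> R) (C : set 'rV[R]_n)
  (x s : nat -> 'rV[R]_n) (t eps gamma theta lambda : nat -> R)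
  (phi : nat -> 'rV[R]_n -> 'rV[R]_n -> 'rV[R]_n -> R)
  (gbar thbar lbar : R) :
  convex_funRn f ->
  C !=set0 -> closed C -> convex_setRn C ->
  (* standing assumptions on the forcing parameters *)
  0 <= gbar -> 0 <= thbar < 1/2 -> 0 <= lbar < 1/2 ->
  (forall k, 0 <= gamma k < gbar) ->
  (forall k, 0 <= theta k < thbar) ->
  (forall k, 0 <= lambda k < lbar) ->
  (forall k, 0 <= eps k) ->
  (* Subgradient-InexP iteration, generating an infinite sequence *)
  C (x 0%N) ->
  (forall k, ~ subdiff f (x k) 0) ->
  (forall k, s k != 0 /\ eps_subdiff f (eps k) (x k) (s k)) ->
  (forall k, 0 < t k) ->
  (forall k, rel_err_tol (gamma k) (theta k) (lambda k) (phi k)) ->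
  (forall k, inexP C (phi k) (x k) (x k - t k *: s k) (x k.+1)) ->
  let nu := (1 + 2 * gbar) / (1 - 2 * lbar) in
  forall z, C z -> forall k : nat,
    enorm (x k.+1 - z) ^+ 2 <=
      enorm (x k - z) ^+ 2 + nu * t k ^+ 2 * enorm (s k) ^+ 2
      - 2 * t k * (f (x k) - f z - eps k).
Proof.
move=> _ _ _ _ _ /andP[_ thb1] /andP[_ lb1] hg hth hl _ C0 _ hs ht herr hP nu z Cz k.
have Cx : C (x k) by case: k => [|k]; [exact: C0 | exact: (hP k).1].
have /andP[g0 ggb] := hg k.
have /andP[_ thth] := hth k.
have /andP[l0 llb] := hl k.
have step := subgradient_step_dist z (ltW (ht k)) (hs k).2.
have proj := inexP_dist (hP k) Cz.
have tol := inexP_tolerance g0 (ltW (lt_trans thth thb1)) l0 (lt_trans llb lb1)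
  (herr k) Cx (hP k).
have factor := tolerance_factor_mono g0 (ltW ggb) l0 (ltW llb) lb1.
have step_len : x k - t k *: s k - x k = (- t k) *: s k.
  by rewrite addrAC subrr add0r scaleNr.
rewrite step_len enormZ_sq sqrrN in tol.
have T0 : 0 <= t k ^+ 2 * enorm (s k) ^+ 2 by rewrite mulr_ge0 ?sqr_ge0.
have cost : 2 * phi k (x k) (x k - t k *: s k) (x k.+1)
    - enorm (x k.+1 - (x k - t k *: s k)) ^+ 2
    <= (nu - 1) * (t k ^+ 2 * enorm (s k) ^+ 2).
  by apply: (le_trans tol); rewrite ler_wpM2r // lerB.
rewrite -mulrA; move: step proj cost; clear -nu; lra.
Qed.
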